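(* Assume the setting, majorant assumptions and constants of the context. Let $x_k$ be an iterate of the INL-CondG method with $x_k\in C\cap B(x_*,\sigma)\setminus\{x_*\}$ and $F(x_k)\neq0$, where the invertible matrix $M_k$ satisfies $\|M_k^{-1}F'(x_k)\|\le\omega_1$, $\|M_k^{-1}F'(x_k)-I\|\le\omega_2$, and for some invertible $P_k$ and scalar $\eta_k$ the residual satisfies $\|P_kr_k\|\le\eta_k\|P_kF(x_k)\|$ and $0\le\eta_k\,\mathrm{cond}(P_kF'(x_k))\le\vartheta$; let $\theta_k\ge0$ and $x_{k+1}=\mathrm{CondG}(y_k,x_k,\theta_k\|s_k\|^2)$. Then $$\|x_{k+1}-x_*\|\le\omega_1(1+\vartheta)(1+\sqrt{2\theta_k})|n_f(\|x_k-x_*\|)|+\big(\omega_1[(1+\vartheta)\sqrt{2\theta_k}+\vartheta]+\omega_2\big)\|x_k-x_*\|,$$ where $n_f(t)=t-f(t)/f'(t)$. If moreover $\theta_k\le\lambda^2/2$, then $\|x_{k+1}-x_*\|<\|x_k-x_*\|$.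
   Context: Setting: $\Omega\subset\mathbb{R}^n$ is open, $F:\Omega\to\mathbb{R}^n$ is continuously differentiable with Jacobian $F'(x)$, $C\subset\Omega$ is a nonempty convex compact set, and $x_*\in C$ satisfies $F(x_* )=0$ with $F'(x_* )$ nonsingular. $\|\cdot\|$ is the Euclidean norm on $\mathbb{R}^n$ and the induced operator norm on matrices; $B(a,\delta)$ is the open ball of center $a$ and radius $\delta$; $\mathrm{cond}(A)=\|A^{-1}\|\|A\|$. Majorant assumptions: $R>0$, $\kappa:=\sup\{t\in[0,R): B(x_*,t)\subset\Omega\}$, and $f:[0,R)\to\mathbb{R}$ is continuously differentiable with $$\|F'(x_* )^{-1}[F'(x)-F'(x_*+\tau(x-x_* ))]\|\le f'(\|x-x_*\|)-f'(\tau\|x-x_*\|)\quad\text{for all }\tau\in[0,1],\ x\in B(x_*,\kappa),$$ (h1) $f(0)=0$, $f'(0)=-1$; (h2) $f'$ is strictly increasing. Constants: $0\le\vartheta<1$, $0\le\omega_2<\omega_1$, $\omega_1\vartheta+\omega_2<1$, $\lambda\in[0,(1-\omega_2-\omega_1\vartheta)/(\omega_1(1+\vartheta)))$; $\nu:=\sup\{t\in[0,R): f'(t)<0\}$; $\rho:=\sup\{\delta\in(0,\nu): \omega_1(1+\vartheta)(1+\lambda)\big(\tfrac{f(t)}{tf'(t)}-1\big)+\omega_1[(1+\vartheta)\lambda+\vartheta]+\omega_2<1 \text{ for all } t\in(0,\delta)\}$; $\sigma:=\min\{\kappa,\rho\}$. CondG procedure $z=\mathrm{CondG}(y,x,\varepsilon)$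 (for $y\in\mathbb{R}^n$, $x\in C$, $\varepsilon\ge0$): set $z_1=x$, $t=1$. (P1) Compute an optimal solution $u_t$ of $g_t^*=\min_{u\in C}\langle z_t-y,u-z_t\rangle$. (P2) If $g_t^*\ge-\varepsilon$, set $z=z_t$ and stop; otherwise set $\alpha_t=\min\{1,-g_t^*/\|u_t-z_t\|^2\}$, $z_{t+1}=z_t+\alpha_t(u_t-z_t)$, $t\leftarrow t+1$ and go to (P1). INL-CondG method: given $x_0\in C$ and $\{\theta_j\}\subset[0,\infty)$, for $k=0,1,\dots$: if $F(x_k)=0$ stop; otherwise choose an invertible matrix $M_k$ (approximating $F'(x_k)$) and compute $(s_k,r_k,y_k)$ with $M_ks_k=-F(x_k)+r_k$, $y_k=x_k+s_k$; then set $x_{k+1}=\mathrm{CondG}(y_k,x_k,\theta_k\|s_k\|^2)$. *)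

From mathcomp Require Import ssreflect ssrfun ssrbool eqtype ssrnat seq fintype bigop.
From Stdlib Require Import Reals ClassicalEpsilon.
Set Implicit Arguments.
Unset Strict Implicit.
Local Open Scope R_scope.

Definition vec (n : nat) := 'I_n -> R.
Definition mat (n : nat) := 'I_n -> 'I_n -> R.

Definition vsum (n : nat) (g : 'I_n -> R) : R := \big[Rplus/0]_(i < n) g i.

Definition vzero (n : nat) : vec n := fun _ => 0.
Arguments vzero : clear implicits.
Definition vadd n (x y : vec n) : vec n := fun i => x i + y i.
Definition vsub n (x y : vec n) : vec n := fun i => x i - y i.
Definition vscale n (a : R) (x : vec n) : vec n := fun i => a * x i.

Definition inner n (x y : vec n) : R := vsum (fun i => x i * y i).
Definition vnorm n (x : vec n) : R := sqrt (inner x x).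

Definition ball n (a : vec n) (d : R) : vec n -> Prop := fun x => vnorm (vsub x a) < d.

Definition mv n (A : mat n) (x : vec n) : vec n := fun i => vsum (fun j => A i j * x j).
Definition mmul n (A B : mat n) : mat n := fun i k => vsum (fun j => A i j * B j k).
Definition mid (n : nat) : mat n := fun i j => if i == j then 1 else 0.
Arguments mid : clear implicits.
Definition msub n (A B : mat n) : mat n := fun i j => A i j - B i j.
Definition minvertible n (A : mat n) : Prop := exists B : mat n, mmul A B = mid n /\ mmul B A = mid n.
(* the inverse matrix (meaningful when A is invertible) *)
Definition minv n (A : mat n) : mat n :=
  epsilon (inhabits (fun _ _ => 0)) (fun B : mat n => mmul A B = mid n /\ mmul B A = mid n).
Definition opnorm n (A : mat n) : R :=
  epsilon (inhabits 0) (is_lub (fun r => exists x : vec n, vnorm x <= 1 /\ r = vnorm (mv A x))).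
Definition cond n (A : mat n) : R := opnorm (minv A) * opnorm A.

Definition is_open n (Om : vec n -> Prop) : Prop :=
  forall x, Om x -> exists d, 0 < d /\ forall y, ball x d y -> Om y.

Definition has_jacobian n (Om : vec n -> Prop) (F : vec n -> vec n) (DF : vec n -> mat n) : Prop :=
  forall x, Om x -> forall eps, 0 < eps -> exists d, 0 < d /\
    forall y, Om y -> vnorm (vsub y x) < d ->
      vnorm (vsub (vsub (F y) (F x)) (mv (DF x) (vsub y x))) <= eps * vnorm (vsub y x).

Definition jac_continuous n (Om : vec n -> Prop) (DF : vec n -> mat n) : Prop :=
  forall x, Om x -> forall eps, 0 < eps -> exists d, 0 < d /\
    forall y, Om y -> vnorm (vsub y x) < d -> opnorm (msub (DF y) (DF x)) < eps.

Definition C1_on n (Om : vec n -> Prop) (F : vec n -> vec n) (DF : vec n -> mat n) : Prop :=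
  is_open Om /\ has_jacobian Om F DF /\ jac_continuous Om DF.

Definition convex n (C : vec n -> Prop) : Prop :=
  forall a b, C a -> C b -> forall t, 0 <= t <= 1 ->
    C (vadd (vscale (1 - t) a) (vscale t b)).

Definition seq_compact n (C : vec n -> Prop) : Prop :=
  forall u : nat -> vec n, (forall k, C (u k)) ->
    exists (phi : nat -> nat) (l : vec n),
      (forall k, (phi k < phi (S k))%nat) /\ C l /\
      forall eps, 0 < eps -> exists N, forall k, (N <= k)%nat -> vnorm (vsub (u (phi k)) l) < eps.

(* one-variable calculus on a set D of reals (one-sided at endpoints) *)
Definition has_deriv_within (D : R -> Prop) (f : R -> R) (t l : R) : Prop :=
  forall eps, 0 < eps -> exists d, 0 < d /\
    forall s, D s -> s <> t -> Rabs (s - t) < d -> Rabs ((f s - f t) / (s - t) - l) < eps.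

Definition cont_within (D : R -> Prop) (g : R -> R) (t : R) : Prop :=
  forall eps, 0 < eps -> exists d, 0 < d /\
    forall s, D s -> Rabs (s - t) < d -> Rabs (g s - g t) < eps.

Definition cg_argmin n (C : vec n -> Prop) (y z u : vec n) : Prop :=
  C u /\ forall v, C v -> inner (vsub z y) (vsub u z) <= inner (vsub z y) (vsub v z).

(* condG_run C y eps z zout : starting from the current iterate z, the
   procedure (with any admissible choice of the optimal solutions u_t)
   terminates after finitely many steps with output zout. *)
Inductive condG_run n (C : vec n -> Prop) (y : vec n) (eps : R) : vec n -> vec n -> Prop :=
| cg_stop : forall z u, cg_argmin C y z u ->
    inner (vsub z y) (vsub u z) >= - eps -> condG_run C y eps z z
| cg_step : forall z u zout, cg_argmin C y z u ->
    inner (vsub z y) (vsub u z) < - eps ->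
    condG_run C y eps
      (vadd z (vscale (Rmin 1 (- inner (vsub z y) (vsub u z) / (vnorm (vsub u z)) ^ 2)) (vsub u z)))
      zout ->
    condG_run C y eps z zout.

Definition CondG n (C : vec n -> Prop) (y x : vec n) (eps : R) (z : vec n) : Prop :=
  condG_run C y eps x z.

Definition nf (f f' : R -> R) (t : R) : R := t - f t / f' t.

From mathcomp Require Import ssreflect ssrfun ssrbool eqtype ssrnat seq fintype bigop.
From Stdlib Require Import Reals ClassicalEpsilon.
From mathcomp Require Import ssralg matrix mxalgebra Rstruct.
From Stdlib Require Import Lra FunctionalExtensionality.
Set Implicit Arguments.
Unset Strict Implicit.
Local Open Scope R_scope.

(* With t = |x_k - x⋆| and A = F'(x⋆)^-1, comparing derivatives along the
   segment [x⋆, x_k] turns the majorant condition into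
   |A F'(x_k) w| >= -f'(t) |w| (so F'(x_k) is invertible) and
   |A (F(x_k) - F'(x_k) (x_k - x⋆))| <= t f'(t) - f(t); hence the exact Newton
   direction w = F'(x_k)^-1 F(x_k) satisfies |w - (x_k - x⋆)| <= |n_f(t)|.
   The inexact point y_k = x_k + s_k differs from x_k - w by the preconditioning
   defect (at most omega_2 t) and by M_k^-1 r_k, which the residual condition
   bounds by omega_1 vartheta |w|.  The stopping test of CondG, combined with the
   optimality of its last linear subproblem at the feasible point x⋆, gives
   |x_{k+1} - x⋆|^2 <= |y_k - x⋆|^2 + 2 theta_k |s_k|^2.  The strict decrease
   is the defining inequality of rho, evaluated at t. *)

(** * Euclidean geometry of R^n *)

Lemma vsum_ext n (f g : 'I_n -> R) : (forall i, f i = g i) -> vsum f = vsum g.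
Proof. by move=> H; rewrite (functional_extensionality _ _ H). Qed.

Lemma vsumD n (f g : 'I_n -> R) : vsum (fun i => f i + g i) = vsum f + vsum g.
Proof. by rewrite /vsum big_split. Qed.

Lemma vsumZ n c (g : 'I_n -> R) : vsum (fun i => c * g i) = c * vsum g.
Proof. by rewrite /vsum big_distrr. Qed.

Lemma vsum_le n (f g : 'I_n -> R) : (forall i, f i <= g i) -> vsum f <= vsum g.
Proof.
move=> H; apply: (big_ind2 (fun a b => a <= b)) => [|a b c d *|i _]; [lra|lra|exact: H].
Qed.

Lemma vsum_ge0 n (f : 'I_n -> R) : (forall i, 0 <= f i) -> 0 <= vsum f.
Proof. by move=> H; apply: (big_ind (fun a => 0 <= a)) => [|a b *|i _]; [lra|lra|exact: H]. Qed.

Lemma vsum_ge_term n (f : 'I_n -> R) i : (forall j, 0 <= f j) -> f i <= vsum f.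
Proof.
move=> H; rewrite /vsum (bigD1 i) //= -[X in X <= _]Rplus_0_r.
apply: Rplus_le_compat_l.
by apply: (big_ind (fun a => 0 <= a)) => [|a b *|j _]; [lra|lra|exact: H].
Qed.

Lemma vsum_swap n (a : 'I_n -> 'I_n -> R) :
  vsum (fun i => vsum (fun j => a i j)) = vsum (fun j => vsum (fun i => a i j)).
Proof. by rewrite /vsum exchange_big. Qed.

Lemma vsum_delta n (x : 'I_n -> R) i :
  vsum (fun j => (if i == j then 1 else 0) * x j) = x i.
Proof.
rewrite /vsum (bigD1 i) //= eqxx big1; first lra.
by move=> j Hj; rewrite eq_sym (negbTE Hj) Rmult_0_l.
Qed.

Ltac vec_ring := apply: functional_extensionality => ?; rewrite /vadd /vsub /vscale /vzero; ring.

Lemma vsub_eq0 n (a b : vec n) : vsub a b = vzero n -> a = b.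
Proof.
move=> H; apply: functional_extensionality => i.
have := congr1 (fun f => f i) H; rewrite /vsub /vzero; lra.
Qed.

Lemma inner_ge0 n (x : vec n) : 0 <= inner x x.
Proof. apply: vsum_ge0 => i; nra. Qed.

Lemma inner_subr n (v a b : vec n) : inner v (vsub a b) = inner v a - inner v b.
Proof.
have -> : forall p q, p - q = p + (-1) * q by move=> p q; ring.
by rewrite /inner -vsumZ -vsumD; apply: vsum_ext => i; rewrite /vsub; ring.
Qed.

Lemma inner_scaler n (v a : vec n) c : inner v (vscale c a) = c * inner v a.
Proof. rewrite /inner -vsumZ; apply: vsum_ext => i; rewrite /vscale; ring. Qed.

Lemma inner_sub_scale n (x y : vec n) a :
  inner (vsub x (vscale a y)) (vsub x (vscale a y)) =
  inner x x - 2 * a * inner x y + a * a * inner y y.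
Proof.
have -> : forall p q r, p - q + r = p + (-1) * q + r by move=> p q r; ring.
rewrite /inner -!vsumZ -!vsumD; apply: vsum_ext => i; rewrite /vsub /vscale; ring.
Qed.

Lemma inner_add n (x y : vec n) :
  inner (vadd x y) (vadd x y) = inner x x + 2 * inner x y + inner y y.
Proof.
rewrite /inner -!vsumZ -!vsumD; apply: vsum_ext => i; rewrite /vadd; ring.
Qed.

Lemma inner_sq_le n (x y : vec n) : inner x y * inner x y <= inner x x * inner y y.
Proof.
have Hq a : 0 <= inner x x - 2 * a * inner x y + a * a * inner y y.
  by rewrite -inner_sub_scale; apply: inner_ge0.
have := inner_ge0 y; have := inner_ge0 x.
move: Hq; set p := inner x y; set q := inner y y; set r := inner x x => Hq Hr Hy.
case: (Rle_lt_or_eq_dec _ _ Hy) => Hq0.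
- (* minimise the quadratic at a = p / q *)
  have := Hq (p / q).
  have -> : r - 2 * (p / q) * p + p / q * (p / q) * q = (r * q - p * p) / q by field; lra.
  move=> H; have := Rmult_le_compat_r q _ _ (Rlt_le _ _ Hq0) H.
  have -> : (r * q - p * p) / q * q = r * q - p * p by field; lra.
  lra.
- rewrite -Hq0 in Hq *; rewrite Rmult_0_r.
  case: (Req_dec p 0) => [-> | Hp]; first lra.
  have := Hq ((r + 1) / (2 * p)).
  have -> : 2 * ((r + 1) / (2 * p)) * p = r + 1 by field.
  lra.
Qed.

Lemma vnorm_ge0 n (x : vec n) : 0 <= vnorm x.
Proof. exact: sqrt_pos. Qed.

Lemma vnorm_sq n (x : vec n) : vnorm x * vnorm x = inner x x.
Proof. by rewrite /vnorm sqrt_sqrt //; apply: inner_ge0. Qed.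

Lemma le_of_sq_le a b : 0 <= b -> a * a <= b * b -> a <= b.
Proof. nra. Qed.

Lemma inner_le_vnorm n (x y : vec n) : Rabs (inner x y) <= vnorm x * vnorm y.
Proof.
apply: le_of_sq_le; first by apply: Rmult_le_pos; apply: vnorm_ge0.
rewrite -Rabs_mult Rabs_right; last by apply: Rle_ge; apply: Rle_0_sqr.
have -> : vnorm x * vnorm y * (vnorm x * vnorm y) = vnorm x * vnorm x * (vnorm y * vnorm y) by ring.
rewrite !vnorm_sq; exact: inner_sq_le.
Qed.

Lemma vnorm_triangle n (x y : vec n) : vnorm (vadd x y) <= vnorm x + vnorm y.
Proof.
apply: le_of_sq_le; first by have := vnorm_ge0 x; have := vnorm_ge0 y; lra.
rewrite vnorm_sq inner_add -!vnorm_sq.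
have := Rle_abs (inner x y); have := inner_le_vnorm x y; lra.
Qed.

Lemma vnorm_scale n a (x : vec n) : vnorm (vscale a x) = Rabs a * vnorm x.
Proof.
rewrite /vnorm; have -> : inner (vscale a x) (vscale a x) = a * a * inner x x.
  by rewrite /inner -vsumZ; apply: vsum_ext => i; rewrite /vscale; ring.
rewrite sqrt_mult_alt; last nra.
by rewrite -(sqrt_Rsqr_abs a).
Qed.

Lemma vnorm_opp n (x : vec n) : vnorm (vscale (-1) x) = vnorm x.
Proof. by rewrite vnorm_scale Rabs_Ropp Rabs_R1 Rmult_1_l. Qed.

Lemma vnorm_eq0 n (x : vec n) : vnorm x = 0 -> x = vzero n.
Proof.
move=> H; have Hi : inner x x = 0 by rewrite -vnorm_sq H; ring.
apply: functional_extensionality => i; rewrite /vzero.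
have := @vsum_ge_term n (fun j => x j * x j) i (fun j => ltac:(nra)).
rewrite -/(inner x x) Hi; nra.
Qed.

Lemma vnorm0 n : vnorm (vzero n) = 0.
Proof.
have -> : vzero n = vscale 0 (vzero n) by vec_ring.
rewrite vnorm_scale Rabs_R0; ring.
Qed.

Lemma vnorm_sub_gt0 n (x y : vec n) : x <> y -> 0 < vnorm (vsub x y).
Proof.
move=> Hxy; case: (Rle_lt_or_eq_dec _ _ (vnorm_ge0 (vsub x y))) => // H0.
by case: Hxy; apply: vsub_eq0; apply: vnorm_eq0.
Qed.

Lemma vnorm_subC n (x y : vec n) : vnorm (vsub x y) = vnorm (vsub y x).
Proof. by rewrite -vnorm_opp; congr vnorm; vec_ring. Qed.

Lemma vnorm_sub_ge n (x y : vec n) : vnorm x - vnorm y <= vnorm (vsub x y).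
Proof.
have := vnorm_triangle (vsub x y) y.
have -> : vadd (vsub x y) y = x by vec_ring.
lra.
Qed.

Lemma vnorm_le_of_inner_le n (u : vec n) c :
  (forall v, inner v u <= vnorm v * c) -> 0 <= c -> vnorm u <= c.
Proof.
move=> Hu Hc; have := Hu u; rewrite -vnorm_sq.
case: (Rle_lt_or_eq_dec _ _ (vnorm_ge0 u)) => [Hpos | <-]; last by lra.
by move=> /(Rmult_le_reg_l _ _ _ Hpos).
Qed.

Lemma convex_segment n (C : vec n -> Prop) a b : convex C -> C a -> C b ->
  forall tau, 0 <= tau <= 1 -> C (vadd a (vscale tau (vsub b a))).
Proof.
move=> HC Ha Hb tau Htau; have := HC a b Ha Hb tau Htau.
by have -> : vadd (vscale (1 - tau) a) (vscale tau b) = vadd a (vscale tau (vsub b a)) by vec_ring.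
Qed.

(** * Matrices and the operator norm *)

Lemma mv_add n (A : mat n) x y : mv A (vadd x y) = vadd (mv A x) (mv A y).
Proof.
apply: functional_extensionality => i; rewrite /mv /vadd -vsumD.
by apply: vsum_ext => j; ring.
Qed.

Lemma mv_scale n (A : mat n) a x : mv A (vscale a x) = vscale a (mv A x).
Proof.
apply: functional_extensionality => i; rewrite /mv /vscale -vsumZ.
by apply: vsum_ext => j; ring.
Qed.

Lemma mv_sub n (A : mat n) x y : mv A (vsub x y) = vsub (mv A x) (mv A y).
Proof.
have -> : vsub x y = vadd x (vscale (-1) y) by vec_ring.
rewrite mv_add mv_scale; vec_ring.
Qed.

Lemma mv0 n (A : mat n) : mv A (vzero n) = vzero n.
Proof.
have -> : vzero n = vscale 0 (vzero n) by vec_ring.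
rewrite mv_scale; vec_ring.
Qed.

Lemma mv_mmul n (A B : mat n) x : mv (mmul A B) x = mv A (mv B x).
Proof.
apply: functional_extensionality => i; rewrite /mv /mmul.
rewrite (vsum_ext (g := fun j => vsum (fun l => A i l * B l j * x j))); last first.
  by move=> j; rewrite Rmult_comm -vsumZ; apply: vsum_ext => l; ring.
rewrite vsum_swap; apply: vsum_ext => l.
by rewrite -vsumZ; apply: vsum_ext => j; ring.
Qed.

Lemma mv_msub n (A B : mat n) x : mv (msub A B) x = vsub (mv A x) (mv B x).
Proof.
apply: functional_extensionality => i; rewrite /mv /msub /vsub.
have -> : forall a b, a - b = a + (-1) * b by move=> a b; ring.
by rewrite -vsumZ -vsumD; apply: vsum_ext => j; ring.
Qed.

Lemma mv_mid n x : mv (mid n) x = x.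
Proof. by apply: functional_extensionality => i; apply: vsum_delta. Qed.

Lemma minv_spec n (A : mat n) : minvertible A ->
  (forall x, mv A (mv (minv A) x) = x) /\ (forall x, mv (minv A) (mv A x) = x).
Proof.
move=> HA; have [H1 H2] := epsilon_spec (inhabits (fun _ _ => 0))
  (fun B : mat n => mmul A B = mid n /\ mmul B A = mid n) HA.
by split=> x; rewrite -mv_mmul ?H1 ?H2 mv_mid.
Qed.

Lemma minvertible_mv_inj n (A : mat n) x y : minvertible A -> mv A x = mv A y -> x = y.
Proof. by move=> /minv_spec[_ HA] Hxy; rewrite -(HA x) Hxy HA. Qed.

Section MatrixOfMat.
Local Open Scope ring_scope.
Variable n : nat.

Definition mx_of (A : mat n) : 'M[R]_n := \matrix_(i, j) A i j.
Definition mat_of (M : 'M[R]_n) : mat n := fun i j => M i j.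

Lemma mx_ofK (A : mat n) : mat_of (mx_of A) = A.
Proof.
by apply: functional_extensionality => i; apply: functional_extensionality => j; rewrite /mat_of mxE.
Qed.

Lemma mmul_mat_of (M N : 'M[R]_n) : mmul (mat_of M) (mat_of N) = mat_of (M *m N).
Proof.
apply: functional_extensionality => i; apply: functional_extensionality => k.
by rewrite /mat_of mxE.
Qed.

Lemma mid_mat_of : mid n = mat_of 1%:M.
Proof.
apply: functional_extensionality => i; apply: functional_extensionality => j.
by rewrite /mid /mat_of mxE; case: (i == j).
Qed.

Lemma mv_mx_of_col (A : mat n) (N : 'M[R]_n) j :
  mv A (fun k => N k j) = fun i => (mx_of A *m N) i j.
Proof.
apply: functional_extensionality => i; rewrite mxE.
by apply: (@eq_bigr R 0%R Rplus) => k _; rewrite mxE.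
Qed.

Lemma inj_minvertible (A : mat n) :
  (forall x, mv A x = vzero n -> x = vzero n) -> minvertible A.
Proof.
move=> Hinj; have HA : mx_of A \in unitmx.
  rewrite -row_full_unit -cokermx_eq0; apply/eqP/matrixP => i j.
  have Hker : mv A (fun k => cokermx (mx_of A) k j) = vzero n.
    by rewrite mv_mx_of_col mulmx_coker; apply: functional_extensionality => k; rewrite mxE.
  have /= -> := congr1 (fun x => x i) (Hinj _ Hker).
  by rewrite mxE.
set B := invmx (mx_of A); exists (mat_of B).
by rewrite -(mx_ofK A) !mmul_mat_of /B mulmxV // mulVmx // mid_mat_of.
Qed.

End MatrixOfMat.

Lemma minvertible_mmul n (A B : mat n) :
  minvertible A -> minvertible B -> minvertible (mmul A B).
Proof.
move=> HA HB; apply: inj_minvertible => x Hx.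
by apply: (minvertible_mv_inj HB); apply: (minvertible_mv_inj HA); rewrite -mv_mmul Hx !mv0.
Qed.

Lemma mv_frobenius_bound n (A : mat n) x :
  vnorm (mv A x) <= sqrt (vsum (fun i => inner (A i) (A i))) * vnorm x.
Proof.
rewrite /vnorm -sqrt_mult_alt; last by apply: vsum_ge0 => i; apply: inner_ge0.
apply: sqrt_le_1_alt; rewrite Rmult_comm -vsumZ; apply: vsum_le => i.
by have := inner_sq_le (A i) x; rewrite /mv -/(inner (A i) x); nra.
Qed.

Lemma opnorm_is_lub n (A : mat n) :
  is_lub (fun r => exists x : vec n, vnorm x <= 1 /\ r = vnorm (mv A x)) (opnorm A).
Proof.
set E := fun r => _.
have HE : bound E.
  exists (sqrt (vsum (fun i => inner (A i) (A i)))) => r [x [Hx ->]].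
  apply: Rle_trans (mv_frobenius_bound A x) _.
  have := sqrt_pos (vsum (fun i => inner (A i) (A i))); have := vnorm_ge0 x; nra.
have HE0 : exists r, E r by exists 0, (vzero n); rewrite mv0 vnorm0; split; [lra|].
have [m Hm] := completeness E HE HE0.
by apply: (epsilon_spec (inhabits 0)); exists m.
Qed.

Lemma opnorm_ge0 n (A : mat n) : 0 <= opnorm A.
Proof.
apply: (proj1 (opnorm_is_lub A)); exists (vzero n).
by rewrite mv0 vnorm0; split; [lra|].
Qed.

Lemma opnorm_le n (A : mat n) x : vnorm (mv A x) <= opnorm A * vnorm x.
Proof.
case: (Req_dec (vnorm x) 0) => [/vnorm_eq0 -> | Hx].
  by rewrite mv0 vnorm0; lra.
have Hpos : 0 < / vnorm x by apply: Rinv_0_lt_compat; have := vnorm_ge0 x; lra.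
have Hunit : vnorm (vscale (/ vnorm x) x) <= 1.
  by rewrite vnorm_scale Rabs_right ?Rinv_l //; lra.
have := proj1 (opnorm_is_lub A) _ (ex_intro _ _ (conj Hunit erefl)).
rewrite mv_scale vnorm_scale Rabs_right; last lra.
move=> H; have := Rmult_le_compat_r (vnorm x) _ _ (vnorm_ge0 x) H.
by rewrite Rmult_comm -Rmult_assoc Rinv_r // Rmult_1_l.
Qed.

Lemma inner_mv_le n (v x : vec n) (A : mat n) :
  Rabs (inner v (mv A x)) <= vnorm v * (opnorm A * vnorm x).
Proof.
apply: Rle_trans (inner_le_vnorm _ _) _.
by apply: Rmult_le_compat_l; [apply: vnorm_ge0 | apply: opnorm_le].
Qed.

Lemma mv_lower_bound n (A B J : mat n) c :
  (forall w, mv A (mv B w) = w) -> opnorm (mmul A (msub J B)) <= c ->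
  forall w, (1 - c) * vnorm w <= vnorm (mv A (mv J w)).
Proof.
move=> HAB Hc w.
have := opnorm_le (mmul A (msub J B)) w.
rewrite mv_mmul mv_msub mv_sub HAB vnorm_subC.
have := vnorm_sub_ge w (mv A (mv J w)).
have := Rmult_le_compat_r _ _ _ (vnorm_ge0 w) Hc; lra.
Qed.

(** * Suprema and calculus on [0, 1] *)

Lemma lub_gt (E : R -> Prop) m x : is_lub E m -> x < m -> exists y, E y /\ x < y.
Proof.
move=> [_ Hlub] Hx; apply: NNPP => Hno.
suff : m <= x by lra.
apply: Hlub => y Ey; case: (Rle_lt_dec y x) => // Hy.
by case: Hno; exists y.
Qed.

Lemma lub_forall_below (P Q : R -> Prop) rho t :
  is_lub (fun d => P d /\ forall s, 0 < s < d -> Q s) rho -> 0 < t < rho -> Q t.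
Proof. by move=> Hrho [Ht0 Ht]; have [d [[_ HQ] Htd]] := lub_gt Hrho Ht; apply: HQ. Qed.

Lemma incr_neg_below_lub (g : R -> R) Rr nu t :
  (forall s u, 0 <= s < Rr -> 0 <= u < Rr -> s < u -> g s < g u) ->
  is_lub (fun s => 0 <= s < Rr /\ g s < 0) nu -> 0 <= t < nu -> g t < 0.
Proof.
move=> Hincr Hnu [Ht0 Ht]; have [s [[[Hs0 HsR] Hgs] Hts]] := lub_gt Hnu Ht.
by have := Hincr t s (conj Ht0 (Rlt_trans _ _ _ Hts HsR)) (conj Hs0 HsR) Hts; lra.
Qed.

Local Notation I01 := (fun s : R => 0 <= s <= 1).

Lemma has_deriv_within_add D f g lf lg t :
  has_deriv_within D f t lf -> has_deriv_within D g t lg ->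
  has_deriv_within D (fun s => f s + g s) t (lf + lg).
Proof.
move=> Hf Hg eps He.
have [d1 [Hd1 H1]] := Hf (eps / 2) ltac:(lra).
have [d2 [Hd2 H2]] := Hg (eps / 2) ltac:(lra).
exists (Rmin d1 d2); split=> [|s Ds Hst Hs]; first exact: Rmin_pos.
have := H1 s Ds Hst (Rlt_le_trans _ _ _ Hs (Rmin_l _ _)).
have := H2 s Ds Hst (Rlt_le_trans _ _ _ Hs (Rmin_r _ _)).
have -> : (f s + g s - (f t + g t)) / (s - t) - (lf + lg) =
   ((f s - f t) / (s - t) - lf) + ((g s - g t) / (s - t) - lg) by field; lra.
have := Rabs_triang ((f s - f t) / (s - t) - lf) ((g s - g t) / (s - t) - lg); lra.
Qed.

Lemma has_deriv_within_scal D f l c t :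
  has_deriv_within D f t l -> has_deriv_within D (fun s => c * f s) t (c * l).
Proof.
move=> Hf eps He; have Hc := Rabs_pos c.
have [d [Hd H]] := Hf (eps / (Rabs c + 1)) ltac:(apply: Rdiv_lt_0_compat; lra).
exists d; split=> // s Ds Hst Hs.
have -> : (c * f s - c * f t) / (s - t) - c * l = c * ((f s - f t) / (s - t) - l) by field; lra.
rewrite Rabs_mult; have := H s Ds Hst Hs; set q := Rabs _ => Hq.
have -> : eps = (Rabs c + 1) * (eps / (Rabs c + 1)) by field; lra.
have := Rabs_pos ((f s - f t) / (s - t) - l); rewrite -/q; nra.
Qed.

Lemma has_deriv_within_linear D a t : has_deriv_within D (fun s => a * s) t a.
Proof.
move=> eps He; exists 1; split=> [|s _ Hst _]; first lra.
have -> : (a * s - a * t) / (s - t) - a = 0 by field; lra.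
by rewrite Rabs_R0.
Qed.

Lemma has_deriv_within_comp_scale (f f' : R -> R) Rr t tau :
  0 < t < Rr -> I01 tau ->
  has_deriv_within (fun s => 0 <= s < Rr) f (tau * t) (f' (tau * t)) ->
  has_deriv_within I01 (fun s => f (s * t)) tau (t * f' (tau * t)).
Proof.
move=> Ht Htau Hf eps He.
have [d [Hd H]] := Hf (eps / t) ltac:(apply: Rdiv_lt_0_compat; lra).
exists (d / t); split=> [|s Ds Hst Hs]; first by apply: Rdiv_lt_0_compat; lra.
have Hst' : s * t <> tau * t by move=> /(Rmult_eq_reg_r _ _ _) E; apply: Hst; apply: E; lra.
have Hs' : Rabs (s * t - tau * t) < d.
  rewrite -Rmult_minus_distr_r Rabs_mult (Rabs_right t); last lra.
  have -> : d = d / t * t by field; lra.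
  by apply: Rmult_lt_compat_r; lra.
have H1 := H (s * t) ltac:(split; nra) Hst' Hs'.
have -> : (f (s * t) - f (tau * t)) / (s - tau) - t * f' (tau * t) =
  t * ((f (s * t) - f (tau * t)) / (s * t - tau * t) - f' (tau * t)).
  by field; split; [lra | move=> E; apply: Hst'; lra].
rewrite Rabs_mult (Rabs_right t); last lra.
have -> : eps = t * (eps / t) by field; lra.
by apply: Rmult_lt_compat_l; lra.
Qed.

Lemma has_deriv_within_cont D f l t : has_deriv_within D f t l -> cont_within D f t.
Proof.
move=> Hf eps He; have [d [Hd H]] := Hf 1 ltac:(lra).
set K := Rabs l + 1; have HK : 0 < K by have := Rabs_pos l; rewrite /K; lra.
exists (Rmin d (eps / K)); split=> [|s Ds Hs].
  by apply: Rmin_pos => //; apply: Rdiv_lt_0_compat.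
have Hsd := Rlt_le_trans _ _ _ Hs (Rmin_l _ _).
have Hse := Rlt_le_trans _ _ _ Hs (Rmin_r _ _).
case: (Req_dec s t) => [-> | Hst]; first by rewrite Rminus_diag Rabs_R0.
have Hne : s - t <> 0 by lra.
have -> : f s - f t = ((f s - f t) / (s - t) - l + l) * (s - t) by field.
rewrite Rabs_mult.
have H1 : Rabs ((f s - f t) / (s - t) - l + l) <= K.
  by have := H s Ds Hst Hsd; have := Rabs_triang ((f s - f t) / (s - t) - l) l; rewrite /K; lra.
have := Rmult_le_compat_r _ _ _ (Rabs_pos (s - t)) H1.
have : K * Rabs (s - t) < eps.
  have -> : eps = K * (eps / K) by field; lra.
  exact: Rmult_lt_compat_l.
lra.
Qed.

Section NonpositiveDerivative.
Variables (g g' : R -> R) (eps : R).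
Hypothesis Hd : forall tau, I01 tau -> has_deriv_within I01 g tau (g' tau).
Hypothesis Heps : 0 < eps.

Definition below_slope (tau : R) : Prop := I01 tau /\ g tau <= g 0 + eps * tau.

Lemma below_slope_sup c : is_lub below_slope c -> below_slope c.
Proof.
move=> Hc; have Hc0 : 0 <= c by apply: (proj1 Hc); split; [lra | rewrite Rmult_0_r; lra].
have Hc1 : c <= 1 by apply: (proj2 Hc) => x [[_ ?] _].
split; first lra.
apply: Rnot_lt_le => Hgt.
have [eta [Heta Hcont]] := has_deriv_within_cont (Hd (conj Hc0 Hc1)) (ltac:(lra) :
  0 < g c - (g 0 + eps * c)).
have [s [[Hs01 Hgs] Hs]] := lub_gt Hc (ltac:(lra) : c - eta < c).
have Hsc : s <= c by apply: (proj1 Hc).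
have := Hcont s Hs01 ltac:(rewrite Rabs_left1; lra).
have := Rle_abs (g c - g s); rewrite Rabs_minus_sym.
have := Rmult_le_compat_l _ _ _ (Rlt_le _ _ Heps) Hsc; lra.
Qed.

Lemma below_slope_extend c : g' c <= 0 -> 0 <= c < 1 -> below_slope c ->
  exists s, c < s /\ below_slope s.
Proof.
move=> Hg' Hc [_ Hgc].
have [d [Hdp Hder]] := Hd (conj (proj1 Hc) (Rlt_le _ _ (proj2 Hc))) Heps.
have Hm : 0 < Rmin d (1 - c) by apply: Rmin_pos; lra.
have Hm1 := Rmin_l d (1 - c); have Hm2 := Rmin_r d (1 - c).
set s := c + Rmin d (1 - c) / 2.
have Hsc : 0 < s - c by rewrite /s; lra.
have := Hder s ltac:(rewrite /s; lra) ltac:(rewrite /s; lra) ltac:(rewrite /s Rabs_right; lra).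
move=> /(Rle_lt_trans _ _ _ (Rle_abs _)) Hq.
have : g s - g c < eps * (s - c).
  have -> : g s - g c = (g s - g c) / (s - c) * (s - c) by field; lra.
  by apply: Rmult_lt_compat_r; lra.
exists s; split; [lra | split; [rewrite /s; lra | nra]].
Qed.

End NonpositiveDerivative.

Lemma deriv_nonpos_le01 (g g' : R -> R) :
  (forall tau, I01 tau -> has_deriv_within I01 g tau (g' tau)) ->
  (forall tau, I01 tau -> g' tau <= 0) -> g 1 <= g 0.
Proof.
move=> Hd Hn; apply: Rle_plus_epsilon => eps Heps.
have H0 : below_slope g eps 0 by split; [lra | rewrite Rmult_0_r; lra].
have Hb : bound (below_slope g eps) by exists 1 => x [[_ ?] _].
have [c Hc] := completeness _ Hb (ex_intro _ 0 H0).
have [[Hc0 Hc1] Hgc] := below_slope_sup Hd Heps Hc.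
case: (Rle_lt_or_eq_dec _ _ Hc1) => [Hlt | Hc1']; last by rewrite Hc1' Rmult_1_r in Hgc.
have [s [Hcs Hs]] := below_slope_extend Hd Heps (Hn c (conj Hc0 Hc1)) (conj Hc0 Hlt) (conj (conj Hc0 Hc1) Hgc).
by have := proj1 Hc s Hs; lra.
Qed.

Lemma deriv_le_increment (g g' h h' : R -> R) :
  (forall tau, I01 tau -> has_deriv_within I01 g tau (g' tau)) ->
  (forall tau, I01 tau -> has_deriv_within I01 h tau (h' tau)) ->
  (forall tau, I01 tau -> g' tau <= h' tau) -> g 1 - g 0 <= h 1 - h 0.
Proof.
move=> Hg Hh Hgh.
suff : g 1 + (-1) * h 1 <= g 0 + (-1) * h 0 by lra.
apply: (@deriv_nonpos_le01 (fun s => g s + (-1) * h s) (fun s => g' s + (-1) * h' s)).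
- by move=> tau Htau; apply: has_deriv_within_add; [apply: Hg | apply: has_deriv_within_scal; apply: Hh].
- by move=> tau Htau; have := Hgh tau Htau; lra.
Qed.

Lemma has_deriv_within_segment n (Om : vec n -> Prop) F DF (a e v : vec n) (A : mat n) tau0 :
  has_jacobian Om F DF -> (forall s, I01 s -> Om (vadd a (vscale s e))) -> I01 tau0 ->
  has_deriv_within I01 (fun s => inner v (mv A (F (vadd a (vscale s e))))) tau0
    (inner v (mv A (mv (DF (vadd a (vscale tau0 e))) e))).
Proof.
move=> HJ HOm Ht eps He.
set p := vadd a (vscale tau0 e).
set B := vnorm v * opnorm A * vnorm e.
have Hv := vnorm_ge0 v; have HA := opnorm_ge0 A; have He0 := vnorm_ge0 e.
have HB : 0 <= B by apply: Rmult_le_pos => //; apply: Rmult_le_pos.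
have HeK : 0 < eps / (B + 1) by apply: Rdiv_lt_0_compat; lra.
have [d [Hd Hder]] := HJ p (HOm _ Ht) _ HeK.
exists (d / (vnorm e + 1)); split=> [|s Ds Hst Hs]; first by apply: Rdiv_lt_0_compat; lra.
have Hs0 : 0 < Rabs (s - tau0) by apply: Rabs_pos_lt; lra.
set y := vadd a (vscale s e).
have Eyp : vsub y p = vscale (s - tau0) e by rewrite /y /p; vec_ring.
have Hyp : vnorm (vsub y p) < d.
  rewrite Eyp vnorm_scale; have -> : d = d / (vnorm e + 1) * (vnorm e + 1) by field; lra.
  by apply: Rle_lt_trans (Rmult_lt_compat_r _ _ _ _ Hs); [nra | lra].
have HR := Hder y (HOm _ Ds) Hyp; rewrite Eyp vnorm_scale in HR.
set R0 := vsub (vsub (F y) (F p)) _ in HR.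
have -> : (inner v (mv A (F y)) - inner v (mv A (F p))) / (s - tau0)
      - inner v (mv A (mv (DF p) e)) = inner v (mv A R0) / (s - tau0).
  rewrite /R0 !mv_sub !mv_scale !inner_subr inner_scaler; field; lra.
have HvR : Rabs (inner v (mv A R0)) <= eps / (B + 1) * B * Rabs (s - tau0).
  apply: Rle_trans (inner_mv_le _ _ _) _.
  have -> : eps / (B + 1) * B * Rabs (s - tau0) =
    vnorm v * (opnorm A * (eps / (B + 1) * (Rabs (s - tau0) * vnorm e))) by rewrite /B; ring.
  by apply: Rmult_le_compat_l => //; apply: Rmult_le_compat_l.
rewrite /Rdiv Rabs_mult Rabs_inv.
apply: (Rmult_lt_reg_r (Rabs (s - tau0))) => //.
rewrite Rmult_assoc Rinv_l ?Rmult_1_r; last lra.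
apply: Rle_lt_trans HvR _; apply: Rmult_lt_compat_r => //.
have -> : eps / (B + 1) * B = eps * (B / (B + 1)) by field; lra.
have : B / (B + 1) < 1 by apply: (Rmult_lt_reg_r (B + 1)); [lra | field_simplify; lra].
nra.
Qed.

(** * The CondG procedure *)

Lemma condG_run_stop n (C : vec n -> Prop) y eps z zout : condG_run C y eps z zout ->
  exists u, cg_argmin C y zout u /\ inner (vsub zout y) (vsub u zout) >= - eps.
Proof. by elim=> [z0 u Hu Hi | *] //; exists u. Qed.

Lemma CondG_dist_sq n (C : vec n -> Prop) y x0 eps z x :
  CondG C y x0 eps z -> C x ->
  inner (vsub z x) (vsub z x) <= inner (vsub y x) (vsub y x) + 2 * eps.
Proof.
move=> /condG_run_stop [u [[_ Hmin] Hstop]] Hx.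
(* optimality of u tested at the feasible point x, then the stopping test *)
have Hzx : inner (vsub y z) (vsub z x) >= - eps.
  have -> : inner (vsub y z) (vsub z x) = inner (vsub z y) (vsub x z).
    by apply: vsum_ext => i; rewrite /vsub; ring.
  by have := Hmin x Hx; lra.
have := inner_add (vsub y z) (vsub z x).
have -> : vadd (vsub y z) (vsub z x) = vsub y x by vec_ring.
have := inner_ge0 (vsub y z); lra.
Qed.

Lemma CondG_dist n (C : vec n -> Prop) (y x0 s z x : vec n) th :
  CondG C y x0 (th * vnorm s ^ 2) z -> C x -> 0 <= th ->
  vnorm (vsub z x) <= vnorm (vsub y x) + sqrt (2 * th) * vnorm s.
Proof.
move=> Hz Hx Hth; have := CondG_dist_sq Hz Hx.
rewrite -!vnorm_sq /= Rmult_1_r.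
have Hb := vnorm_ge0 (vsub y x); have Hc := vnorm_ge0 s; have HS0 := sqrt_pos (2 * th).
have HS : sqrt (2 * th) * sqrt (2 * th) = 2 * th by apply: sqrt_sqrt; lra.
set a := vnorm (vsub z x); set b := vnorm (vsub y x) in Hb *; set c := vnorm s in Hc *.
set S := sqrt (2 * th) in HS HS0 *.
have HSc : 0 <= S * c by apply: Rmult_le_pos.
move=> Ha; apply: le_of_sq_le; first lra.
have -> : (b + S * c) * (b + S * c) = b * b + 2 * b * (S * c) + S * S * (c * c) by ring.
rewrite HS; have := Rmult_le_pos _ _ Hb HSc; lra.
Qed.

(** * Consequences of the majorant condition *)

Section Majorant.
Variables (n : nat) (Om : vec n -> Prop) (F : vec n -> vec n) (DF : vec n -> mat n).
Variables (xs x : vec n) (A : mat n) (f f' : R -> R) (Rr : R).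
Local Notation e := (vsub x xs).
Local Notation t := (vnorm (vsub x xs)).
Local Notation seg tau := (vadd xs (vscale tau (vsub x xs))).

Hypothesis HJac : has_jacobian Om F DF.
Hypothesis Hseg : forall tau, I01 tau -> Om (seg tau).
Hypothesis Ht : 0 < t < Rr.
Hypothesis Hf : forall s, 0 <= s < Rr -> has_deriv_within (fun s => 0 <= s < Rr) f s (f' s).
Hypothesis Hmaj : forall tau, I01 tau ->
  opnorm (mmul A (msub (DF x) (DF (seg tau)))) <= f' t - f' (tau * t).

Lemma has_deriv_within_majorant_seg tau : I01 tau ->
  has_deriv_within I01 (fun s => f (s * t)) tau (t * f' (tau * t)).
Proof.
move=> Htau; apply: (@has_deriv_within_comp_scale _ _ Rr) => //.
by apply: Hf; have := Rmult_le_compat_r _ _ _ (vnorm_ge0 e) (proj2 Htau); nra.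
Qed.

Lemma majorant_deriv_le tau : I01 tau -> f' (tau * t) <= f' t.
Proof.
by move=> Htau; have := Hmaj Htau; have := opnorm_ge0 (mmul A (msub (DF x) (DF (seg tau)))); lra.
Qed.

Lemma majorant_slope_le : f t - f 0 <= t * f' t.
Proof.
have Hincr tau : I01 tau -> t * f' (tau * t) <= t * f' t.
  by move=> Htau; apply: Rmult_le_compat_l; [lra | apply: majorant_deriv_le].
have := deriv_le_increment has_deriv_within_majorant_seg
  (fun s _ => has_deriv_within_linear I01 (t * f' t) s) Hincr.
rewrite Rmult_1_l Rmult_0_l; lra.
Qed.

Lemma inner_linearization_error_le v :
  inner v (mv A (vsub (vsub (F x) (F xs)) (mv (DF x) e)))
  <= vnorm v * (t * f' t - (f t - f 0)).
Proof.
set c := inner v (mv A (mv (DF x) e)).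
have Hg tau : I01 tau -> has_deriv_within I01
    (fun s => inner v (mv A (F (seg s))) + (- c) * s) tau
    (inner v (mv A (mv (DF (seg tau)) e)) + - c).
  by move=> Htau; apply: has_deriv_within_add;
    [apply: has_deriv_within_segment HJac Hseg Htau | apply: has_deriv_within_linear].
have Hh tau : I01 tau -> has_deriv_within I01
    (fun s => vnorm v * (t * f' t * s + (-1) * f (s * t))) tau
    (vnorm v * (t * f' t + (-1) * (t * f' (tau * t)))).
  move=> Htau; apply: has_deriv_within_scal; apply: has_deriv_within_add.
    exact: has_deriv_within_linear.
  by apply: has_deriv_within_scal; apply: has_deriv_within_majorant_seg.
have Hgh tau : I01 tau -> inner v (mv A (mv (DF (seg tau)) e)) + - c <=
    vnorm v * (t * f' t + (-1) * (t * f' (tau * t))).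
  move=> Htau.
  have HM := Rmult_le_compat_r _ _ _ (vnorm_ge0 e) (Hmaj Htau).
  have := Rmult_le_compat_l _ _ _ (vnorm_ge0 v) HM.
  have := inner_mv_le v e (mmul A (msub (DF x) (DF (seg tau)))).
  rewrite mv_mmul mv_msub (mv_sub A) inner_subr -/c.
  have := Rle_abs (inner v (mv A (mv (DF (seg tau)) e)) - c); rewrite Rabs_minus_sym.
  have -> : vnorm v * (t * f' t + (-1) * (t * f' (tau * t))) =
    vnorm v * ((f' t - f' (tau * t)) * t) by ring.
  lra.
have := deriv_le_increment Hg Hh Hgh.
have -> : seg 1 = x by vec_ring.
have -> : seg 0 = xs by vec_ring.
have -> : inner v (mv A (vsub (vsub (F x) (F xs)) (mv (DF x) e))) =
    inner v (mv A (F x)) - inner v (mv A (F xs)) - c by rewrite /c !mv_sub !inner_subr; ring.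
rewrite Rmult_1_l Rmult_0_l; lra.
Qed.

Lemma linearization_error_le :
  vnorm (mv A (vsub (vsub (F x) (F xs)) (mv (DF x) e))) <= t * f' t - (f t - f 0).
Proof.
apply: vnorm_le_of_inner_le; first exact: inner_linearization_error_le.
by have := majorant_slope_le; lra.
Qed.

Hypothesis HA : forall w, mv A (mv (DF xs) w) = w.
Hypothesis HFxs : F xs = vzero n.
Hypotheses (Hf0 : f 0 = 0) (Hf'0 : f' 0 = -1) (Hf't : f' t < 0).

Lemma jacobian_lower_bound w : - f' t * vnorm w <= vnorm (mv A (mv (DF x) w)).
Proof.
have Hm0 := Hmaj (conj (Rle_refl 0) Rle_0_1).
have E0 : seg 0 = xs by vec_ring.
rewrite E0 Rmult_0_l Hf'0 in Hm0.
by have := mv_lower_bound HA Hm0 w; lra.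
Qed.

Lemma jacobian_invertible : minvertible (DF x).
Proof.
apply: inj_minvertible => w Hw; apply: vnorm_eq0.
have := jacobian_lower_bound w; rewrite Hw mv0 vnorm0.
have := vnorm_ge0 w; nra.
Qed.

Lemma newton_point_dist : vnorm (vsub (mv (minv (DF x)) (F x)) e) <= - nf f f' t.
Proof.
set w := vsub (mv (minv (DF x)) (F x)) e.
have Hw : mv (DF x) w = vsub (vsub (F x) (F xs)) (mv (DF x) e).
  rewrite /w mv_sub (proj1 (minv_spec jacobian_invertible)) HFxs; vec_ring.
have := jacobian_lower_bound w; rewrite Hw.
have := linearization_error_le; rewrite Hf0 /nf => H1 H2.
apply: (Rmult_le_reg_l (- f' t)); first lra.
have -> : - f' t * - (t - f t / f' t) = t * f' t - (f t - 0) by field; lra.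
lra.
Qed.

End Majorant.

(** * The inexact Newton step *)

Lemma preconditioned_residual_le n (J M P : mat n) (r w : vec n) eta w1 vt :
  minvertible J -> minvertible P ->
  vnorm (mv P r) <= eta * vnorm (mv P (mv J w)) ->
  0 <= eta * cond (mmul P J) <= vt -> opnorm (mmul M J) <= w1 ->
  vnorm (mv M r) <= w1 * vt * vnorm w.
Proof.
move=> HJ HP Hres Heta HMJ.
set B := mmul P J in Heta; set Bi := minv B.
have Er : mv M r = mv (mmul M J) (mv Bi (mv P r)).
  rewrite mv_mmul; congr mv; apply: (minvertible_mv_inj HP).
  by rewrite -mv_mmul (proj1 (minv_spec (minvertible_mmul HP HJ))).
rewrite -mv_mmul -/B in Hres.
have HBi := opnorm_ge0 Bi; have Hw := vnorm_ge0 w; have HPr := vnorm_ge0 (mv P r).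
(* [|B^-1| |P r| <= eta cond(B) |w|]; for [eta < 0] the residual vanishes *)
have Hkey : opnorm Bi * vnorm (mv P r) <= vt * vnorm w.
  case: (Rle_lt_dec 0 eta) => Heta0.
  - have := Rle_trans _ _ _ Hres (Rmult_le_compat_l _ _ _ Heta0 (opnorm_le B w)).
    move=> /(Rmult_le_compat_l _ _ _ HBi) H; apply: Rle_trans H _.
    have -> : opnorm Bi * (eta * (opnorm B * vnorm w)) = eta * cond B * vnorm w.
      by rewrite /cond /Bi; ring.
    by apply: Rmult_le_compat_r; lra.
  - have HPr0 : vnorm (mv P r) = 0 by have := vnorm_ge0 (mv B w); nra.
    by rewrite HPr0 Rmult_0_r; apply: Rmult_le_pos => //; lra.
rewrite Er; apply: Rle_trans (opnorm_le _ _) _.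
apply: Rle_trans (Rmult_le_compat_r _ _ _ (vnorm_ge0 _) HMJ) _.
have Hw1 : 0 <= w1 by have := opnorm_ge0 (mmul M J); lra.
rewrite Rmult_assoc; apply: Rmult_le_compat_l => //.
exact: Rle_trans (opnorm_le _ _) Hkey.
Qed.

Section InexactStep.
Variables (n : nat) (J M : mat n) (e w r s : vec n) (w1 w2 vt N : R).
Hypotheses (HMJ : opnorm (mmul M J) <= w1) (HMJI : opnorm (msub (mmul M J) (mid n)) <= w2).
Hypotheses (Hr : vnorm (mv M r) <= w1 * vt * vnorm w) (Hvt : 0 <= vt).
Hypothesis Hw : vnorm (vsub w e) <= N.
Hypothesis Hs : s = vadd (vscale (-1) (mv M (mv J w))) (mv M r).

Lemma mmul_opnorm_le (x : vec n) : vnorm (mv M (mv J x)) <= w1 * vnorm x.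
Proof.
rewrite -mv_mmul; apply: Rle_trans (opnorm_le _ _) _.
by apply: Rmult_le_compat_r => //; apply: vnorm_ge0.
Qed.

Lemma inexact_step_le : vnorm s <= w1 * (1 + vt) * (N + vnorm e).
Proof.
have Hw1 : 0 <= w1 by have := opnorm_ge0 (mmul M J); lra.
have HwN : vnorm w <= N + vnorm e by have := vnorm_sub_ge w e; lra.
rewrite Hs; apply: Rle_trans (vnorm_triangle _ _) _; rewrite vnorm_opp.
have := mmul_opnorm_le w; have := Rmult_le_compat_l _ _ _ Hw1 HwN.
have := Rmult_le_compat_l _ _ _ (Rmult_le_pos _ _ Hw1 Hvt) HwN; lra.
Qed.

Lemma inexact_point_dist_le :
  vnorm (vadd e s) <= w2 * vnorm e + w1 * N + w1 * vt * (N + vnorm e).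
Proof.
have Hw1 : 0 <= w1 by have := opnorm_ge0 (mmul M J); lra.
have HwN : vnorm w <= N + vnorm e by have := vnorm_sub_ge w e; lra.
have -> : vadd e s = vadd (vscale (-1) (mv (msub (mmul M J) (mid n)) e))
                          (vadd (vscale (-1) (mv M (mv J (vsub w e)))) (mv M r)).
  by rewrite Hs mv_msub mv_mmul mv_mid !mv_sub; vec_ring.
apply: Rle_trans (vnorm_triangle _ _) _; rewrite vnorm_opp.
have H1 := Rle_trans _ _ _ (opnorm_le _ e) (Rmult_le_compat_r _ _ _ (vnorm_ge0 e) HMJI).
have H2 : vnorm (vadd (vscale (-1) (mv M (mv J (vsub w e)))) (mv M r))
          <= w1 * N + w1 * vt * (N + vnorm e).
  apply: Rle_trans (vnorm_triangle _ _) _; rewrite vnorm_opp.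
  have := mmul_opnorm_le (vsub w e); have := Rmult_le_compat_l _ _ _ Hw1 Hw.
  have := Rmult_le_compat_l _ _ _ (Rmult_le_pos _ _ Hw1 Hvt) HwN; lra.
lra.
Qed.

End InexactStep.

Lemma inexact_newton_step_le n (J Mk P : mat n) (Fx e r s : vec n) w1 w2 vt eta N :
  minvertible J -> minvertible Mk -> minvertible P ->
  opnorm (mmul (minv Mk) J) <= w1 -> opnorm (msub (mmul (minv Mk) J) (mid n)) <= w2 ->
  mv Mk s = vadd (vscale (-1) Fx) r ->
  vnorm (mv P r) <= eta * vnorm (mv P Fx) -> 0 <= eta * cond (mmul P J) <= vt ->
  vnorm (vsub (mv (minv J) Fx) e) <= N ->
  vnorm s <= w1 * (1 + vt) * (N + vnorm e) /\
  vnorm (vadd e s) <= w2 * vnorm e + w1 * N + w1 * vt * (N + vnorm e).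
Proof.
move=> HJ HMk HP HMJ HMJI Hs Hres Heta HN.
have HJw := proj1 (minv_spec HJ) Fx.
have Hr : vnorm (mv (minv Mk) r) <= w1 * vt * vnorm (mv (minv J) Fx).
  by apply: (preconditioned_residual_le HJ HP _ Heta HMJ); rewrite HJw.
have Hvt : 0 <= vt := Rle_trans _ _ _ (proj1 Heta) (proj2 Heta).
have {}Hs : s = vadd (vscale (-1) (mv (minv Mk) (mv J (mv (minv J) Fx)))) (mv (minv Mk) r).
  by rewrite HJw -mv_scale -mv_add -Hs (proj2 (minv_spec HMk)).
split; [exact: inexact_step_le HMJ Hr Hvt HN Hs | exact: inexact_point_dist_le HMJ HMJI Hr Hvt HN Hs].
Qed.

Lemma inexact_condG_error_le (z y s N t S w1 w2 vt : R) :
  0 <= S -> z <= y + S * s -> y <= w2 * t + w1 * N + w1 * vt * (N + t) ->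
  s <= w1 * (1 + vt) * (N + t) ->
  z <= w1 * (1 + vt) * (1 + S) * N + (w1 * ((1 + vt) * S + vt) + w2) * t.
Proof.
move=> HS Hz Hy Hs; have := Rmult_le_compat_l _ _ _ HS Hs.
have -> : w1 * (1 + vt) * (1 + S) * N + (w1 * ((1 + vt) * S + vt) + w2) * t =
  w2 * t + w1 * N + w1 * vt * (N + t) + S * (w1 * (1 + vt) * (N + t)) by ring.
lra.
Qed.

Lemma inexact_condG_error_lt (z N t S lam w1 w2 vt : R) :
  0 < t -> 0 <= N -> 0 <= w1 -> 0 <= vt -> 0 <= S <= lam ->
  z <= w1 * (1 + vt) * (1 + S) * N + (w1 * ((1 + vt) * S + vt) + w2) * t ->
  w1 * (1 + vt) * (1 + lam) * (N / t) + w1 * ((1 + vt) * lam + vt) + w2 < 1 ->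
  z < t.
Proof.
move=> Ht HN Hw1 Hvt [HS HSl] Hz Hlt.
have Hc : 0 <= w1 * (1 + vt) * (N + t) by apply: Rmult_le_pos; [nra | lra].
have := Rmult_le_compat_l _ _ _ Hc HSl.
have := Rmult_lt_compat_l _ _ _ Ht Hlt.
have -> : t * (w1 * (1 + vt) * (1 + lam) * (N / t) + w1 * ((1 + vt) * lam + vt) + w2) =
  w1 * (1 + vt) * (1 + lam) * N + (w1 * ((1 + vt) * lam + vt) + w2) * t by field; lra.
nra.
Qed.

Theorem lemma3
  (n : nat) (Om : vec n -> Prop) (F : vec n -> vec n) (DF : vec n -> mat n)
  (C : vec n -> Prop) (xs : vec n)
  (HF : C1_on Om F DF)
  (HCne : exists c, C c) (HCconv : convex C) (HCcomp : seq_compact C)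
  (HCOm : forall x, C x -> Om x)
  (HxsC : C xs) (HFxs : F xs = vzero n) (HDFxs : minvertible (DF xs))
  (Rr : R) (HR : 0 < Rr) (f f' : R -> R) (kappa : R)
  (Hkappa : is_lub (fun t => 0 <= t < Rr /\ forall y, ball xs t y -> Om y) kappa)
  (Hf : forall t, 0 <= t < Rr ->
          has_deriv_within (fun s => 0 <= s < Rr) f t (f' t) /\
          cont_within (fun s => 0 <= s < Rr) f' t)
  (Hmaj : forall tau x, 0 <= tau <= 1 -> ball xs kappa x ->
     opnorm (mmul (minv (DF xs))
               (msub (DF x) (DF (vadd xs (vscale tau (vsub x xs))))))
     <= f' (vnorm (vsub x xs)) - f' (tau * vnorm (vsub x xs)))
  (Hh1 : f 0 = 0 /\ f' 0 = -1)
  (Hh2 : forall s t, 0 <= s < Rr -> 0 <= t < Rr -> s < t -> f' s < f' t)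
  (vt w1 w2 lam : R)
  (Hvt : 0 <= vt < 1) (Hw : 0 <= w2 < w1) (Hw12 : w1 * vt + w2 < 1)
  (Hlam : 0 <= lam < (1 - w2 - w1 * vt) / (w1 * (1 + vt)))
  (nu rho sigma : R)
  (Hnu : is_lub (fun t => 0 <= t < Rr /\ f' t < 0) nu)
  (Hrho : is_lub (fun d => 0 < d < nu /\
            forall t, 0 < t < d ->
              w1 * (1 + vt) * (1 + lam) * (f t / (t * f' t) - 1)
              + w1 * ((1 + vt) * lam + vt) + w2 < 1) rho)
  (Hsigma : sigma = Rmin kappa rho)
  (xk : vec n) (HxkC : C xk) (Hxkb : ball xs sigma xk) (Hxkne : xk <> xs)
  (HFxk : F xk <> vzero n)
  (Mk : mat n) (HMk : minvertible Mk)
  (HMk1 : opnorm (mmul (minv Mk) (DF xk)) <= w1)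
  (HMk2 : opnorm (msub (mmul (minv Mk) (DF xk)) (mid n)) <= w2)
  (sk rk yk : vec n)
  (Hsk : mv Mk sk = vadd (vscale (-1) (F xk)) rk)
  (Hyk : yk = vadd xk sk)
  (Pk : mat n) (HPk : minvertible Pk) (etak : R)
  (Hres : vnorm (mv Pk rk) <= etak * vnorm (mv Pk (F xk)))
  (Heta : 0 <= etak * cond (mmul Pk (DF xk)) <= vt)
  (thetak : R) (Htheta : 0 <= thetak)
  (xk1 : vec n) (Hxk1 : CondG C yk xk (thetak * (vnorm sk) ^ 2) xk1) :
  vnorm (vsub xk1 xs) <=
    w1 * (1 + vt) * (1 + sqrt (2 * thetak)) * Rabs (nf f f' (vnorm (vsub xk xs)))
    + (w1 * ((1 + vt) * sqrt (2 * thetak) + vt) + w2) * vnorm (vsub xk xs)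
  /\ (thetak <= lam ^ 2 / 2 -> vnorm (vsub xk1 xs) < vnorm (vsub xk xs)).
Proof.
set t := vnorm (vsub xk xs).
have Ht0 : 0 < t := vnorm_sub_gt0 Hxkne.
have [Htk Htr] : kappa > t /\ rho > t by apply/Rmin_Rgt; rewrite -Hsigma.
have HtR : t < Rr by apply: Rlt_le_trans Htk _; apply: (proj2 Hkappa) => s [[_ ?] _]; lra.
have Htnu : t < nu by apply: Rlt_le_trans Htr _; apply: (proj2 Hrho) => s [[_ ?] _]; lra.
have Hf't : f' t < 0 := incr_neg_below_lub Hh2 Hnu (conj (Rlt_le _ _ Ht0) Htnu).
have Hseg tau (Htau : 0 <= tau <= 1) := HCOm _ (convex_segment HCconv HxsC HxkC Htau).
have Hmajk tau (Htau : 0 <= tau <= 1) := Hmaj tau xk Htau Htk.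
have HA := proj2 (minv_spec HDFxs).
have HJ := jacobian_invertible Hmajk HA (proj2 Hh1) Hf't.
have Hnewton := newton_point_dist (proj1 (proj2 HF)) Hseg (conj Ht0 HtR)
  (fun s Hs => proj1 (Hf s Hs)) Hmajk HA HFxs (proj1 Hh1) (proj2 Hh1) Hf't.
have [Hsk_le Hyk_le] := inexact_newton_step_le HJ HMk HPk HMk1 HMk2 Hsk Hres Heta Hnewton.
have Eyk : vadd (vsub xk xs) sk = vsub yk xs by rewrite Hyk; vec_ring.
rewrite Eyk -/t in Hyk_le; rewrite -/t in Hnewton Hsk_le.
have HN0 : 0 <= - nf f f' t by have := vnorm_ge0 (vsub (mv (minv (DF xk)) (F xk)) (vsub xk xs)); lra.
have Hbound := inexact_condG_error_le (sqrt_pos (2 * thetak))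
  (CondG_dist Hxk1 HxsC Htheta) Hyk_le Hsk_le.
rewrite Rabs_left1; last lra.
split=> // Hth.
have HSl : 0 <= sqrt (2 * thetak) <= lam.
  split; first exact: sqrt_pos.
  by rewrite -(sqrt_square lam); [apply: sqrt_le_1_alt; nra | lra].
have := lub_forall_below Hrho (conj Ht0 Htr).
have -> : f t / (t * f' t) - 1 = - nf f f' t / t by rewrite /nf; field; lra.
by apply: (inexact_condG_error_lt Ht0 HN0 _ (proj1 Hvt) HSl Hbound); lra.
Qed.
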